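(* For $D \in \mathbb{R}^{m\times n}$ and $Q \in \mathbb{Z}^{m\times n}$ whose $j$th column stores the sorting of the $j$th column of $D$, the call QuickLexSortAllSubsets$(D,Q,\emptyset,\mathbf{0})$ (empty set, zero vector of length $m$) has running time $O(m 2^n)$ and space requirements $O(mn)$.
   Context: ''The $j$th column of $Q$ stores the sorting of the $j$th column of $D$'' means $(Q_{0j},\ldots,Q_{m-1,j})$ is a permutation of $\{0,\ldots,m-1\}$ with $D_{Q_{0j},j} \le \cdots \le D_{Q_{m-1,j},j}$. Model: unit-cost random access machine; outputting a vector of length $m$ costs $O(m)$; space includes the inputs. QuickLexSortRefine$(D,Q,i,L)$: initialize integer arrays $\mathrm{IDval},\mathrm{IDvalInit},\mathrm{subID},\mathrm{newCount},\mathrm{numNewID}$ of length $m$ to zero. For $j=0,\ldots,m-1$: let $r := Q[j,i]$, $\ell := L[r]$; if $\mathrm{IDvalInit}[\ell]=0$, set $\mathrm{IDvalInit}[\ell]:=1$, $\mathrm{IDval}[\ell]:=D[r,i]$; otherwise if $\mathrm{IDval}[\ell]\neq D[r,i]$, set $\mathrm{IDval}[\ell]:=D[r,i]$ and increment $\mathrm{newCount}[\ell]$; then set $\mathrm{subID}[r]:=\mathrm{newCount}[\ell]$. Set $\mathrm{numNewID}[m-1]:=\sum_{j=0}^{m-2}\mathrm{newCount}[j]$ and for $j=m-2,\ldots,1$, $\mathrm{numNewID}[j]:=\mathrm{numNewID}[j+1]-\mathrm{newCount}[j]$. Return $L'$ with $L'[j]:=L[j]+\mathrm{numNewID}[L[j]]+\mathrm{subID}[j]$.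 QuickLexSortAllSubsets$(D,Q,A,L)$ for a set $A\subseteq\{0,\ldots,n-1\}$ (recursive; $\max\emptyset := -1$): for each integer $i$ with $\max(A) < i < n$: set $L' :=$ QuickLexSortRefine$(D,Q,i,L)$, output $L'$, and call QuickLexSortAllSubsets$(D,Q,A\cup\{i\},L')$. *)

From HB Require Import structures.
From mathcomp Require Import all_boot all_order all_algebra.
From mathcomp Require Import reals.
Set Implicit Arguments. Unset Strict Implicit. Unset Printing Implicit Defensive.
Import Order.TTheory GRing.Theory Num.Theory.

(* Cost model: unit-cost RAM.  A computation in the monad [CM] threads a     *)
(* resource state recording the elapsed time (number of unit-cost steps),   *)
(* the current memory usage (in words) and the peak memory usage so far.    *)
Record cst := CSt { time : nat; cur : nat; peak : nat }.

Definition CM (A : Type) := cst -> A * cst.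

Definition ret {A} (a : A) : CM A := fun s => (a, s).
Definition bind {A B} (x : CM A) (f : A -> CM B) : CM B :=
  fun s => let: (a, s') := x s in f a s'.

Notation "x <-- c ;; f" := (bind c (fun x => f))
  (at level 61, c at next level, right associativity).
Notation "c ;;; f" := (bind c (fun _ => f))
  (at level 61, right associativity).

Definition tick (k : nat) : CM unit :=
  fun s => (tt, CSt (time s + k) (cur s) (peak s)).
(* allocate (and zero-initialise) k words: costs k steps and k words *)
Definition alloc (k : nat) : CM unit :=
  fun s => (tt, CSt (time s + k) (cur s + k) (maxn (peak s) (cur s + k))).
Definition free (k : nat) : CM unit :=
  fun s => (tt, CSt (time s) (cur s - k) (peak s)).

Definition aread {T} (x0 : T) (a : seq T) (j : nat) : CM T :=
  tick 1 ;;; ret (nth x0 a j).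
Definition awrite {T} (x0 : T) (a : seq T) (j : nat) (v : T) : CM (seq T) :=
  tick 1 ;;; ret (set_nth x0 a j v).

Fixpoint forM {I A : Type} (s : seq I) (f : I -> A -> CM A) (acc : A) : CM A :=
  match s with
  | [::] => ret acc
  | i :: s' => tick 1 ;;; a <-- f i acc ;; forM s' f a
  end.

(* Entries of Q are row indices, so Q is a matrix over 'I_m.                *)
Definition stores_sorting (R : realType) (m n : nat)
    (D : 'M[R]_(m, n)) (Q : 'M['I_m]_(m, n)) : Prop :=
  forall j : 'I_n,
    injective (fun k : 'I_m => Q k j) /\
    (forall k1 k2 : 'I_m, (k1 <= k2)%N -> (D (Q k1 j) j <= D (Q k2 j) j)%R).

Section Algo.
Variables (R : realType) (m n : nat) (D : 'M[R]_(m, n)) (Q : 'M['I_m]_(m, n)).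

Record rstate := RSt {
  IDval : seq R; IDvalInit : seq nat; subID : seq nat;
  newCount : seq nat; numNewID : seq nat }.

Definition refine_body (i : 'I_n) (L : seq nat) (j : 'I_m) (st : rstate)
    : CM rstate :=
  let: RSt IV IVI sub nc nn := st in
  tick 1 ;;;                                   (* r := Q[j,i] *)
  let r := Q j i in
  l <-- aread 0 L r ;;
  b <-- aread 0 IVI l ;;
  tick 1 ;;;                                   (* test IDvalInit[l] = 0 *)
  p <-- (if b == 0 then
           IVI' <-- awrite 0 IVI l 1 ;;
           tick 1 ;;;                          (* read D[r,i] *)
           IV' <-- awrite 0%R IV l (D r i) ;;
           ret (IV', IVI', nc)
         else
           v <-- aread 0%R IV l ;;
           tick 2 ;;;                          (* read D[r,i], compare *)
           if v != D r i then
             IV' <-- awrite 0%R IV l (D r i) ;;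
             c <-- aread 0 nc l ;;
             tick 1 ;;;                        (* increment *)
             nc' <-- awrite 0 nc l c.+1 ;;
             ret (IV', IVI, nc')
           else ret (IV, IVI, nc)) ;;
  let: (IV', IVI', nc') := p in
  c <-- aread 0 nc' l ;;
  sub' <-- awrite 0 sub r c ;;
  ret (RSt IV' IVI' sub' nc' nn).

Definition refine (i : 'I_n) (L : seq nat) : CM (seq nat) :=
  alloc (5 * m) ;;;
  st0 <-- ret (RSt (nseq m 0%R) (nseq m 0) (nseq m 0) (nseq m 0) (nseq m 0)) ;;
  st <-- forM (enum 'I_m) (refine_body i L) st0 ;;
  let: RSt IV IVI sub nc nn := st in
  s <-- forM (iota 0 m.-1)
          (fun j acc => c <-- aread 0 nc j ;; tick 1 ;;; ret (acc + c)) 0 ;;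
  nn1 <-- awrite 0 nn m.-1 s ;;
  (* for j = m-2 downto 1: numNewID[j] := numNewID[j+1] - newCount[j] *)
  nn2 <-- forM (rev (iota 1 (m.-1).-1))
          (fun j a => x <-- aread 0 a j.+1 ;; c <-- aread 0 nc j ;;
                      tick 1 ;;; awrite 0 a j (x - c)) nn1 ;;
  alloc m ;;;
  L' <-- forM (iota 0 m)
          (fun j a => lj <-- aread 0 L j ;; x <-- aread 0 nn2 lj ;;
                      y <-- aread 0 sub j ;; tick 2 ;;;
                      awrite 0 a j (lj + x + y)) (nseq m 0) ;;
  free (5 * m) ;;;
  ret L'.

(* QuickLexSortAllSubsets(D,Q,A,L), instrumented.  The set A is represented *)
(* by start = max(A) + 1 (the only information about A the algorithm uses). *)
(* The fuel argument is n initially; it bounds the recursion depth, which is *)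
(* at most n anyway (start strictly increases), so it never truncates.      *)
(* A stack frame holds 3 words (start, loop variable i, return address);    *)
(* the vector L' of a loop iteration lives until the recursive call returns.*)
Fixpoint allSubsets (fuel : nat) (start : nat) (L : seq nat) : CM unit :=
  match fuel with
  | 0 => ret tt
  | fuel'.+1 =>
      alloc 3 ;;;
      forM [seq i <- enum 'I_n | (start <= nat_of_ord i)%N]
        (fun (i : 'I_n) _ =>
           L' <-- refine i L ;;
           tick m ;;;                          (* output L' *)
           allSubsets fuel' i.+1 L' ;;;
           free m) tt ;;;
      free 3
  end.

(* Initial memory: the inputs D (m*n words), Q (m*n words), L (m words) and
   A (1 word). *)
Definition init_state : cst :=
  CSt 0 (m * n + m * n + m + 1) (m * n + m * n + m + 1).

Definition run_all_subsets : cst :=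
  (allSubsets n 0 (nseq m 0) init_state).2.

End Algo.

From Pilot Require Import Defs.
From HB Require Import structures.
From mathcomp Require Import all_boot all_order all_algebra.
From mathcomp Require Import reals.
From mathcomp Require Import zify.

Set Implicit Arguments.
Unset Strict Implicit.
Unset Printing Implicit Defensive.

(* Every step of the algorithm has a data-independent cost, so a call of
   QuickLexSortRefine costs O(m) time and O(m) scratch space.
   QuickLexSortAllSubsets makes one such call per nonempty subset of the n
   columns, hence O(m 2^n) time, while the live memory at any moment is one
   stack frame and one vector L' per recursion level, at most n of them, hence
   O(m n) space on top of the O(m n) input. *)

Definition costs {A} (c : CM A) (t a b p : nat) : Prop :=
  forall s, cur s = a ->
    [/\ time (c s).2 <= time s + t, cur (c s).2 = b & peak (c s).2 <= maxn (peak s) p].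

Section CostRules.
Variables A B : Type.

Lemma costs_le (c : CM A) t a b p t' p' :
  costs c t a b p -> t <= t' -> p <= p' -> costs c t' a b p'.
Proof. by move=> cP le_t le_p s /cP[? ? ?]; split; lia. Qed.

Lemma costs_bind (x : CM A) (f : A -> CM B) t1 t2 a b c p1 p2 :
  costs x t1 a b p1 -> (forall v, costs (f v) t2 b c p2) ->
  costs (bind x f) (t1 + t2) a c (maxn p1 p2).
Proof.
move=> xP fP s /xP; rewrite /bind; case: (x s) => v s' /= [? s'_cur ?].
by have [? ? ?] := fP v s' s'_cur; split; lia.
Qed.

Lemma costs_ret (v : A) a b : a = b -> costs (ret v) 0 a b a.
Proof. by move=> <- s /=; split; lia. Qed.

Lemma costs_aread (x0 : A) l j a : costs (aread x0 l j) 1 a a a.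
Proof. by move=> s /=; split; lia. Qed.

Lemma costs_awrite (x0 : A) l j v a : costs (awrite x0 l j v) 1 a a a.
Proof. by move=> s /=; split; lia. Qed.

Lemma costs_forM (s : seq B) (f : B -> A -> CM A) (t : B -> nat) a p acc :
  (forall i acc, costs (f i acc) (t i) a a p) ->
  costs (forM s f acc) (\sum_(i <- s) (t i).+1) a a (maxn a p).
Proof.
move=> fP; elim: s acc => [|i s IHs] acc st st_cur /=.
  by rewrite big_nil; split; lia.
rewrite big_cons /bind /=.
have [] := fP i acc (CSt (time st + 1) (cur st) (peak st)) st_cur.
case: (f i acc _) => v st' /= ? st'_cur ?.
by have [? ? ?] := IHs v st' st'_cur; split; lia.
Qed.

Lemma costs_forM_const (s : seq B) (f : B -> A -> CM A) t a p acc :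
  (forall i acc, costs (f i acc) t a a p) ->
  costs (forM s f acc) (size s * t.+1) a a (maxn a p).
Proof.
move=> /(costs_forM s acc).
by rewrite big_const_seq count_predT iter_addn_0 mulnC.
Qed.

End CostRules.

Lemma costs_tick k a : costs (tick k) k a a a.
Proof. by move=> s /=; split; lia. Qed.

Lemma costs_alloc k a : costs (alloc k) k a (a + k) (a + k).
Proof. by move=> s /=; split; lia. Qed.

Lemma costs_free k a b : a - k = b -> costs (Defs.free k) 0 a b a.
Proof. by move=> <- s /=; split; lia. Qed.

Lemma sum_pow2_nat s n : \sum_(s <= i < n) 2 ^ (n - i.+1) + 1 = 2 ^ (n - s).
Proof.
have [d] : exists d, n - s = d by eexists.
elim: d s => [|d IHd] s ns; first by rewrite big_geq ?ns //; lia.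
rewrite big_ltn; last by lia.
rewrite -addnA IHd; last by lia.
have -> : n - s.+1 = d by lia.
by rewrite ns expnS mul2n addnn.
Qed.

Lemma sum_pow2_ord_ge s n :
  \sum_(i <- [seq i : 'I_n <- enum 'I_n | s <= i]) 2 ^ (n - i.+1) + 1 = 2 ^ (n - s).
Proof.
by rewrite big_filter big_enum_cond -sum_pow2_nat (big_geq_mkord s n xpredT).
Qed.

Ltac costs_step :=
  first [ apply: costs_tick | apply: costs_alloc | apply: costs_aread
        | apply: costs_awrite | (apply: costs_free; try reflexivity)
        | (apply: costs_ret; try reflexivity)
        | (apply: costs_forM_const => ? ?) ].

Ltac costs_program :=
  repeat first
    [ eapply costs_bind; [costs_step | move=> ?]
    | costs_step
    | match goal with |- costs (match ?x with _ => _ end) _ _ _ _ => case: x; intros end ].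

Section QuickLexSort.
Variables (R : realType) (m n : nat) (D : 'M[R]_(m, n)) (Q : 'M['I_m]_(m, n)).
Hypothesis m_gt0 : 0 < m.

Lemma costs_refine_body i L j st a : costs (refine_body D Q i L j st) 13 a a a.
Proof.
case: st => IV IVI sub nc nn s s_cur.
rewrite /refine_body /bind /tick /aread /awrite /ret /=.
by case: eqP => _ /=; [| case: eqP => _ /=]; split; lia.
Qed.

Lemma costs_refine i L a : costs (refine D Q i L) (40 * m) a (a + m) (a + 6 * m).
Proof.
apply: costs_le.
  rewrite /refine; costs_program; first exact: costs_refine_body.
all: rewrite ?size_enum_ord ?size_rev ?size_iota; lia.
Qed.

(* The exact solution of T(s) = 3 + \sum_(s <= i < n) (40 m + m + 1 + T(i+1)),
   where s = max(A) + 1 and the summand counts refine, the output of L' and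
   the loop overhead. *)
Definition subsets_time s := (41 * m + 4) * 2 ^ (n - s) - (41 * m + 1).

Lemma costs_allSubsets fuel start L a :
  costs (allSubsets D Q fuel start L) (subsets_time start) a a
        (a + fuel * (m + 3) + 5 * m).
Proof.
elim: fuel start L a => [|fuel IHfuel] start L a /=.
  by apply: costs_le; [exact: costs_ret | lia | lia].
have iter_time (i : 'I_n) :
    (40 * m + (m + (subsets_time i.+1 + 0))).+1 = (41 * m + 4) * 2 ^ (n - i.+1).
  have : 0 < 2 ^ (n - i.+1) by rewrite expn_gt0.
  by rewrite /subsets_time; nia.
apply: costs_le.
- apply: costs_bind => [|_]; first exact: costs_alloc.
  apply: costs_bind => [|_]; first apply: costs_forM => i _.
  + apply: costs_bind => [|L']; first exact: costs_refine.
    apply: costs_bind => [|_]; first exact: costs_tick.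
    apply: costs_bind => [|_]; first exact: IHfuel.
    by apply: costs_free; lia.
  + by apply: costs_free; lia.
- rewrite (eq_bigr (fun i : 'I_n => (41 * m + 4) * 2 ^ (n - i.+1))) => [|i _].
    rewrite -big_distrr /= addn0.
    have : 0 < 2 ^ (n - start) by rewrite expn_gt0.
    by have := sum_pow2_ord_ge start n; rewrite /subsets_time; nia.
  exact: iter_time.
- lia.
Qed.

End QuickLexSort.

Theorem mainTheorem7 :
  exists c : nat,
    forall (R : realType) (m n : nat) (D : 'M[R]_(m, n)) (Q : 'M['I_m]_(m, n)),
      stores_sorting D Q -> (0 < m)%N -> (0 < n)%N ->
      (time (run_all_subsets D Q) <= c * m * 2 ^ n)%N /\
      (peak (run_all_subsets D Q) <= c * m * n)%N.
Proof.
exists 45 => R m n D Q _ m_gt0 n_gt0.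
have [] := @costs_allSubsets R m n D Q m_gt0 n 0 (nseq m 0) _ (init_state m n) erefl.
have : 0 < 2 ^ n by rewrite expn_gt0.
by rewrite /run_all_subsets /subsets_time /= subn0; nia.
Qed.
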